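(* Work in Scenario 2 with a common prior, and let $(\mathbf x,\mathbf p)$ be a BNIC mechanism. Then for each bidder $i$, the outside-option utility $V_i(\emptyset;t_i)$ does not depend on $t_i$, and the interim IR constraint $V_i(t_i;t_i)\ge V_i(\emptyset;t_i)$ holds for all $t_i\in T_i$ if and only if it holds for some type of the form $t_i=(\underline v_i,\boldsymbol\eta)$ with $\boldsymbol\eta\in\prod_{j\ne i}[\underline\eta_{j\leftarrow i},\bar\eta_{j\leftarrow i}]$.
   Context: Model: there are $n$ bidders $N=\{1,\dots,n\}$ and a seller of a freely replicable good; an allocation is any $\mathbf x\in[0,1]^n$. Bidder $i$ has value $v_i\in[\underline v_i,\bar v_i]\subset\mathbb R_{\ge0}$ and for $j\ne i$ parameters $\eta_{i\leftarrow j}\in[\underline\eta_{i\leftarrow j},\bar\eta_{i\leftarrow j}]\subset\mathbb R_{\ge0}$; valuation $\nu_i(\mathbf x)=v_ix_i-\sum_{j\ne i}\eta_{i\leftarrow j}x_j$, utility $\nu_i(\mathbf x)-p_i$. In Scenario 2, bidder $i$'s private type is $t_i=(v_i,(\eta_{j\leftarrow i})_{j\ne i})\in T_i=[\underline v_i,\bar v_i]\times\prod_{j\ne i}[\underline\eta_{j\leftarrow i},\bar\eta_{j\leftarrow i}]$. Bids lie in $B_i=T_i\cup\{\emptyset\}$; a mechanism is $\mathbf x:B\to[0,1]^n$, $\mathbf p:B\to\mathbb R^n_{\ge0}$ with $x_i=p_i=0$ when $i$ bids $\emptyset$, specified on profiles with at most one $\emptyset$. Common prior: types $t_i\sim F_i$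 independent across bidders. Interim utility: $V_i(\hat t_i;t_i)=\mathbb E[u_i(\mathbf x(\hat t_i,\mathbf t_{-i}),p_i(\hat t_i,\mathbf t_{-i});\mathbf t)\mid t_i]$ with $\mathbf t_{-i}\sim\prod_{j\ne i}F_j$ (others truthful), for $\hat t_i\in B_i$. BNIC: $V_i(t_i;t_i)\ge V_i(\hat t_i;t_i)$ for all $i$ and $t_i,\hat t_i\in T_i$. Interim IR: $V_i(t_i;t_i)\ge V_i(\emptyset;t_i)$. *)

From HB Require Import structures.
From mathcomp Require Import all_boot all_order all_algebra.
Set Implicit Arguments. Unset Strict Implicit. Unset Printing Implicit Defensive.
Import Order.TTheory GRing.Theory Num.Theory.
Local Open Scope ring_scope.

(* A type of bidder i: t_i = (v_i, eta) with eta k = eta_{k <- i} (k <> i);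
   the dummy coordinate eta i is fixed to 0 (see inT). *)
Definition Ty (R : realFieldType) (n : nat) := (R * ('I_n -> R))%type.

(* A bid is Some t (a type report) or None (the outside option \emptyset). *)
Definition Bid (R : realFieldType) (n : nat) := option (Ty R n).

(* t \in T_i ; etalo k j = lower bound of eta_{k <- j}, etahi likewise. *)
Definition inT (R : realFieldType) (n : nat)
  (vlo vhi : 'I_n -> R) (etalo etahi : 'I_n -> 'I_n -> R) (i : 'I_n) (t : Ty R n) : Prop :=
  [/\ vlo i <= t.1 <= vhi i,
      (forall k : 'I_n, k != i -> etalo k i <= t.2 k <= etahi k i)
    & t.2 i = 0].

Definition mechanism (R : realFieldType) (n : nat)
  (x p : ('I_n -> Bid R n) -> 'I_n -> R) : Prop :=
  forall (b : 'I_n -> Bid R n) (j : 'I_n),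
    [/\ 0 <= x b j <= 1, 0 <= p b j & (b j = None -> x b j = 0 /\ p b j = 0)].

(* Valuation nu_i(x) = v_i x_i - sum_{j<>i} eta_{i<-j} x_j, with the eta's
   read off the true type profile t (eta_{i<-j} is part of t_j). *)
Definition valuation (R : realFieldType) (n : nat) (i : 'I_n)
  (t : 'I_n -> Ty R n) (a : 'I_n -> R) : R :=
  (t i).1 * a i - \sum_(j < n | j != i) (t j).2 i * a j.

(* Profiles where i's entry is replaced; the i-th entry of s is ignored. *)
Definition bidprof (R : realFieldType) (n : nat) (i : 'I_n) (b : Bid R n)
  (s : 'I_n -> Ty R n) : 'I_n -> Bid R n :=
  fun j => if j == i then b else Some (s j).
Definition trueprof (R : realFieldType) (n : nat) (i : 'I_n) (ti : Ty R n)
  (s : 'I_n -> Ty R n) : 'I_n -> Ty R n :=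
  fun j => if j == i then ti else s j.

(* Abstract expectation (Daniell-style integral) w.r.t. a probability
   distribution on S supported on supp: a normalized, linear, monotone
   functional on a vector space of integrable functions. *)
Record expectation (R : realFieldType) (S : Type) (supp : S -> Prop) := Expectation {
  integrable : (S -> R) -> Prop;
  Ex : (S -> R) -> R;
  integrable_const : forall c : R, integrable (fun _ => c);
  integrable_add : forall f g, integrable f -> integrable g ->
                     integrable (fun s => f s + g s);
  integrable_scale : forall (c : R) f, integrable f -> integrable (fun s => c * f s);
  Ex_const : forall c : R, Ex (fun _ => c) = c;
  Ex_add : forall f g, integrable f -> integrable g ->
             Ex (fun s => f s + g s) = Ex f + Ex g;
  Ex_scale : forall (c : R) f, integrable f -> Ex (fun s => c * f s) = c * Ex f;
  Ex_mono : forall f g, integrable f -> integrable g ->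
              (forall s, supp s -> f s <= g s) -> Ex f <= Ex g
}.

Definition others_supp (R : realFieldType) (n : nat)
  (vlo vhi : 'I_n -> R) (etalo etahi : 'I_n -> 'I_n -> R) (i : 'I_n)
  (s : 'I_n -> Ty R n) : Prop :=
  forall j : 'I_n, j != i -> inT vlo vhi etalo etahi j (s j).

Definition util_integrand (R : realFieldType) (n : nat)
  (x p : ('I_n -> Bid R n) -> 'I_n -> R) (i : 'I_n) (b : Bid R n) (ti : Ty R n)
  (s : 'I_n -> Ty R n) : R :=
  valuation i (trueprof i ti s) (x (bidprof i b s)) - p (bidprof i b s) i.

From HB Require Import structures.
From mathcomp Require Import all_boot all_order all_algebra.
Import Order.TTheory GRing.Theory Num.Theory.
Local Open Scope ring_scope.

(* Bidding [None] yields x_i = p_i = 0, so the ex-post utility of the outside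
   option is the externality -sum_{j<>i} eta_{i<-j} x_j alone and does not
   involve i's type; hence neither does its expectation.  For the IR
   constraint, a type t_i is at least as well off as the type (vlo_i, eta)
   mimicked by t_i: reporting (vlo_i, eta) gives t_i the utility of that
   type plus (v_i - vlo_i) x_i >= 0, and BNIC says truth-telling is better
   still.  So IR at (vlo_i, eta) propagates to every type. *)

Section ExpectationFacts.

Variables (R : realFieldType) (S : Type) (supp : S -> Prop).
Variable E : expectation R supp.

Lemma Ex_eq_supp (f g : S -> R) :
  integrable E f -> integrable E g -> (forall s, supp s -> f s = g s) ->
  Ex E f = Ex E g.
Proof.
move=> intf intg efg; apply/eqP; rewrite eq_le.
by rewrite !Ex_mono // => s /efg ->.
Qed.

End ExpectationFacts.

Section Utilities.

Variables (R : realFieldType) (n : nat).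
Variables (x p : ('I_n -> Bid R n) -> 'I_n -> R).
Hypothesis hmech : mechanism x p.

Lemma valuation_trueprof (i : 'I_n) (ti : Ty R n) (s : 'I_n -> Ty R n)
    (a : 'I_n -> R) :
  valuation i (trueprof i ti s) a = ti.1 * a i - \sum_(j < n | j != i) (s j).2 i * a j.
Proof.
rewrite /valuation /trueprof eqxx; congr (_ - _).
by apply: eq_bigr => j /negbTE ->.
Qed.

Lemma util_integrand_None (i : 'I_n) (ti : Ty R n) (s : 'I_n -> Ty R n) :
  util_integrand x p i None ti s
  = - \sum_(j < n | j != i) (s j).2 i * x (bidprof i None s) j.
Proof.
rewrite /util_integrand valuation_trueprof.
have [_ _ /(_ _)[|-> ->]] := hmech (bidprof i None s) i.
  by rewrite /bidprof eqxx.
by rewrite mulr0 add0r subr0.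
Qed.

Lemma util_integrand_Some_le (i : 'I_n) (th ti : Ty R n) (s : 'I_n -> Ty R n) :
  th.1 <= ti.1 ->
  util_integrand x p i (Some th) th s <= util_integrand x p i (Some th) ti s.
Proof.
move=> le_v; rewrite /util_integrand !valuation_trueprof !lerD2r.
have [/andP[x_ge0 _] _ _] := hmech (bidprof i (Some th) s) i.
exact: ler_wpM2r.
Qed.

End Utilities.

Lemma inT_lowest_value (R : realFieldType) (n : nat)
    (vlo vhi : 'I_n -> R) (etalo etahi : 'I_n -> 'I_n -> R) (i : 'I_n) :
  vlo i <= vhi i -> (forall k, k != i -> etalo k i <= etahi k i) ->
  exists eta, inT vlo vhi etalo etahi i (vlo i, eta).
Proof.
move=> le_v le_eta; exists (fun k => if k == i then 0 else etalo k i).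
split=> [|k ki|] /=; rewrite ?eqxx ?lexx //.
by rewrite (negbTE ki) lexx le_eta.
Qed.

Section InterimIR.

Variables (R : realFieldType) (n : nat).
Variables (vlo vhi : 'I_n -> R) (etalo etahi : 'I_n -> 'I_n -> R).
Variable E : forall i : 'I_n, expectation R (others_supp vlo vhi etalo etahi i).
Variables (x p : ('I_n -> Bid R n) -> 'I_n -> R).
Hypothesis hmech : mechanism x p.
Hypothesis hint : forall (i : 'I_n) (b : Bid R n) (ti : Ty R n),
  inT vlo vhi etalo etahi i ti ->
  (forall tb, b = Some tb -> inT vlo vhi etalo etahi i tb) ->
  integrable (E i) (util_integrand x p i b ti).

Local Notation inTi := (inT vlo vhi etalo etahi).
Local Notation V i b ti := (Ex (E i) (util_integrand x p i b ti)).

Lemma outside_option_type_indep {i : 'I_n} {ti ti' : Ty R n} :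
  inTi i ti -> inTi i ti' -> V i None ti = V i None ti'.
Proof.
move=> Tti Tti'.
apply: Ex_eq_supp => [||s _]; rewrite ?util_integrand_None //; exact: hint.
Qed.

Hypothesis hBNIC : forall (i : 'I_n) (ti th : Ty R n),
  inTi i ti -> inTi i th -> V i (Some th) ti <= V i (Some ti) ti.

Lemma interim_IR_from_lowest_value (i : 'I_n) (eta : 'I_n -> R) (ti : Ty R n) :
  inTi i (vlo i, eta) -> inTi i ti ->
  V i None (vlo i, eta) <= V i (Some (vlo i, eta)) (vlo i, eta) ->
  V i None ti <= V i (Some ti) ti.
Proof.
move=> Tlo Tti IRlo; have [/andP[vlo_le _] _ _] := Tti.
rewrite (outside_option_type_indep Tti Tlo) (le_trans IRlo) //.
apply: le_trans (hBNIC _ _ _ Tti Tlo).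
apply: Ex_mono => [||s _]; last exact: util_integrand_Some_le.
  by apply: hint => // tb [<-].
by apply: hint => // tb [<-].
Qed.

End InterimIR.

Theorem mainTheorem10 (R : realFieldType) (n : nat)
  (vlo vhi : 'I_n -> R) (etalo etahi : 'I_n -> 'I_n -> R)
  (hv : forall i, 0 <= vlo i <= vhi i)
  (heta : forall k j, k != j -> 0 <= etalo k j <= etahi k j)
  (E : forall i : 'I_n, expectation R (others_supp vlo vhi etalo etahi i))
  (x p : ('I_n -> Bid R n) -> 'I_n -> R)
  (hmech : mechanism x p)
  (hint : forall (i : 'I_n) (b : Bid R n) (ti : Ty R n),
     inT vlo vhi etalo etahi i ti ->
     (forall tb, b = Some tb -> inT vlo vhi etalo etahi i tb) ->
     integrable (E i) (util_integrand x p i b ti))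
  (hBNIC : forall (i : 'I_n) (ti th : Ty R n),
     inT vlo vhi etalo etahi i ti -> inT vlo vhi etalo etahi i th ->
     Ex (E i) (util_integrand x p i (Some th) ti)
       <= Ex (E i) (util_integrand x p i (Some ti) ti)) :
  forall i : 'I_n,
    (forall ti ti' : Ty R n,
       inT vlo vhi etalo etahi i ti -> inT vlo vhi etalo etahi i ti' ->
       Ex (E i) (util_integrand x p i None ti)
         = Ex (E i) (util_integrand x p i None ti'))
    /\
    ((forall ti : Ty R n, inT vlo vhi etalo etahi i ti ->
        Ex (E i) (util_integrand x p i None ti)
          <= Ex (E i) (util_integrand x p i (Some ti) ti))
     <->
     (exists eta : 'I_n -> R,
        inT vlo vhi etalo etahi i (vlo i, eta) /\
        Ex (E i) (util_integrand x p i None (vlo i, eta))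
          <= Ex (E i) (util_integrand x p i (Some (vlo i, eta)) (vlo i, eta)))).
Proof.
move=> i; split=> [ti ti'|]; first exact: outside_option_type_indep.
split=> [IR | [eta [Tlo IRlo]] ti Tti].
  have [eta Tlo] : exists eta, inT vlo vhi etalo etahi i (vlo i, eta).
    apply: inT_lowest_value; first by case/andP: (hv i).
    by move=> k /heta /andP[].
  by exists eta; split=> //; apply: IR.
exact: interim_IR_from_lowest_value Tlo Tti IRlo.
Qed.
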